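(* Let $(v^*,u^* )$ be the unique saddle point of $\min_v\max_u E(v,u)$ and let $L(v,u)=\frac{\alpha}{2}\sum_{s}|v_s-v^*_s|^2+\tau\sum_{s,a}\big(u^*_{sa}\log\frac{u^*_{sa}}{u_{sa}}+u_{sa}-u^*_{sa}\big)$. Consider the natural gradient ascent descent dynamics on $\mathbb{R}^{|S|}\times\mathbb{R}^{|S|\times|A|}_{>0}$: $$\frac{dv_{s'}}{dt}=-\Big(v_{s'}-\frac1\alpha\sum_{s,a}K_{ass'}u_{sa}\Big),\ s'\in S,\qquad \frac{du_{sa}}{dt}=-u_{sa}\Big(\log\frac{u_{sa}}{\tilde u_s}-\frac1\tau\Big(r_{sa}-\sum_{s'}K_{ass'}v_{s'}\Big)\Big),\ (s,a)\in S\times A.$$ Then $L$ is a Lyapunov function for this dynamics: $\frac{dL}{dt}\le 0$ along its trajectories, and the only trajectory of the dynamics along which $\frac{dL}{dt}=0$ is the constant trajectory $(v,u)=(v^*,u^* )$.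
   Context: Finite MDP: state space $S$, action space $A$, transition probabilities $P_{ass'}$ (with $\sum_{s'}P_{ass'}=1$), rewards $r_{sa}\ge0$, discount $\gamma\in(0,1)$, regularization $\tau>0$, and $\alpha>0$. $K_{ass'}=\delta_{ss'}-\gamma P_{ass'}$, $\tilde u_s=\sum_a u_{sa}$, and $E(v,u)=\frac{\alpha}{2}\sum_s v_s^2+\sum_{s,a}u_{sa}(r_{sa}-\sum_{s'}K_{ass'}v_{s'})-\tau\sum_{s,a}u_{sa}\log(u_{sa}/\tilde u_s)$. This min-max problem has a unique saddle point $(v^*,u^* )$ with $u^*_{sa}>0$. *)

From HB Require Import structures.
From mathcomp Require Import all_boot all_order all_algebra.
From mathcomp Require Import all_classical all_reals all_analysis.
Set Implicit Arguments. Unset Strict Implicit. Unset Printing Implicit Defensive.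
Import Order.TTheory GRing.Theory Num.Theory.
Import numFieldNormedType.Exports.
Local Open Scope ring_scope.

Section MDP.
Variables (R : realType) (S A : finType).
Variables (P : A -> S -> S -> R) (r : S -> A -> R) (gamma tau alpha : R).

Definition Kmat (a : A) (s s' : S) : R := (s == s')%:R - gamma * P a s s'.

Definition utilde (u : S -> A -> R) (s : S) : R := \sum_(a : A) u s a.

Definition Efun (v : S -> R) (u : S -> A -> R) : R :=
  alpha / 2 * \sum_(s : S) v s ^+ 2
  + \sum_(s : S) \sum_(a : A) u s a * (r s a - \sum_(s' : S) Kmat a s s' * v s')
  - tau * \sum_(s : S) \sum_(a : A) u s a * ln (u s a / utilde u s).

Definition posu (u : S -> A -> R) : Prop := forall s a, 0 < u s a.

Definition is_saddle (vs : S -> R) (us : S -> A -> R) : Prop :=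
  posu us /\
  (forall u, posu u -> Efun vs u <= Efun vs us) /\
  (forall v, Efun vs us <= Efun v us).

Definition Lyap (vs : S -> R) (us : S -> A -> R) (v : S -> R) (u : S -> A -> R) : R :=
  alpha / 2 * \sum_(s : S) (v s - vs s) ^+ 2
  + tau * \sum_(s : S) \sum_(a : A)
      (us s a * ln (us s a / u s a) + u s a - us s a).

Definition ngad_at (V : R -> S -> R) (U : R -> S -> A -> R) (t : R) : Prop :=
  posu (U t) /\
  (forall s', derivable (fun x => V x s') t 1) /\
  (forall s a, derivable (fun x => U x s a) t 1) /\
  (forall s', derive1 (fun x => V x s') t =
     - (V t s' - alpha^-1 * \sum_(s : S) \sum_(a : A) Kmat a s s' * U t s a)) /\
  (forall s a, derive1 (fun x => U x s a) t =
     - (U t s a * (ln (U t s a / utilde (U t) s)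
                   - tau^-1 * (r s a - \sum_(s' : S) Kmat a s s' * V t s')))).

End MDP.

(* Along the flow, dL/dt = [E(vs,u) - E(vs,us)] + [E(vs,us) - E(v,us)]
   - alpha/2 |v - vs|^2 - tau KL, where KL = sum_sa us_sa ln (pis_sa / pi_sa)
   compares the policies pi = u / u~ and pis = us / us~.  The brackets are
   nonpositive because (vs,us) is a saddle point, and KL >= 0 by Gibbs'
   inequality.  If dL/dt vanishes on an interval then v = vs and pi = pis
   there.  As v is constant, the v-equation gives alpha vs = K^T u, while the
   minimality of vs in E(., us) gives alpha vs = K^T us; hence K^T (u - us) = 0
   with u - us = c_s us_sa.  For w_s = c_s us~_s this says w = gamma P^T w for
   a stochastic P, which forces w = 0 since gamma < 1, i.e. u = us. *)

From HB Require Import structures.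
From mathcomp Require Import all_boot all_order all_algebra.
From mathcomp Require Import all_classical all_reals all_analysis.
From mathcomp Require Import ring lra.
Import Order.TTheory GRing.Theory Num.Theory.
Import numFieldNormedType.Exports.
Local Open Scope ring_scope.
Set Implicit Arguments. Unset Strict Implicit. Unset Printing Implicit Defensive.

Section RealFacts.
Variable R : realType.
Implicit Types (f : R -> R) (t c df : R).

Lemma is_derive_sumr (I : Type) (s : seq I) (F : I -> R -> R) (dF : I -> R) t :
  (forall i, is_derive t 1 (F i) (dF i)) ->
  is_derive t 1 (fun x => \sum_(i <- s) F i x) (\sum_(i <- s) dF i).
Proof.
move=> dFi; rewrite -fct_sumE.
by elim/big_ind2 : _ => // *; [exact: is_derive_cst | exact: is_deriveD].
Qed.

Lemma is_derive_ln_div c f t df : 0 < c -> 0 < f t -> is_derive t 1 f df ->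
  is_derive t 1 (fun x => ln (c / f x)) (- (df / f t)).
Proof.
move=> c_gt0 ft_gt0 df_f.
have dinv : is_derive t 1 (fun x => c * (f x)^-1) (c * (- (f t) ^- 2 *: df)).
  by apply: is_deriveZ; apply: is_deriveV; rewrite // gt_eqF.
have dln : is_derive (c / f t) 1 (@ln R) (c / f t)^-1.
  exact/is_derive1_ln/divr_gt0.
have := @is_derive1_comp R (@ln R) (fun x => c / f x) t _ _ dln dinv.
rewrite /= -[_ *: _]/(_ * _) (_ : _ * _ = - (df / f t)) //.
by field; rewrite !gt_eqF.
Qed.

Lemma ln_le_subr1 (x : R) : 0 < x -> ln x <= x - 1.
Proof. by move=> x_gt0; have := expR_ge1Dx (ln x); rewrite lnK ?posrE //; lra. Qed.

Lemma ln_eq_subr1 (x : R) : 0 < x -> ln x = x - 1 -> x = 1.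
Proof.
move=> x_gt0 lnx; have [lnx0|lnx0] := eqVneq (ln x) 0.
  by rewrite -[x]lnK ?posrE // lnx0 expR0.
by have := expR_gt1Dx lnx0; rewrite lnK ?posrE //; lra.
Qed.

Lemma sumr_sqr_le0 (I : finType) (x : I -> R) :
  \sum_i x i ^+ 2 <= 0 -> forall i, x i = 0.
Proof.
move=> le0 i.
have sum0 : \sum_i x i ^+ 2 = 0.
  by apply/le_anti/andP; split => //; apply: sumr_ge0 => j _; exact: sqr_ge0.
apply/eqP; rewrite -sqrf_eq0; apply/eqP.
by apply: (psumr_eq0P _ sum0) => // j _; exact: sqr_ge0.
Qed.

Lemma sumr_sqrB (I : finType) (x y : I -> R) : \sum_i (x i - y i) ^+ 2 =
  \sum_i x i ^+ 2 - 2 * \sum_i x i * y i + \sum_i y i ^+ 2.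
Proof. by rewrite mulr_sumr -sumrB -big_split /=; apply: eq_bigr => i _; ring. Qed.

(* With [x = q/p]: [p ln (p/q) = p (x - 1 - ln x) + (p - q)], and [ln x <= x - 1]. *)
Lemma gibbs (I : finType) (p q : I -> R) :
  (forall i, 0 < p i) -> (forall i, 0 < q i) -> \sum_i p i = \sum_i q i ->
  0 <= \sum_i p i * ln (p i / q i) /\ (\sum_i p i * ln (p i / q i) = 0 -> p = q).
Proof.
move=> p_gt0 q_gt0 sum_pq.
pose x i := q i / p i.
have x_gt0 i : 0 < x i by exact: divr_gt0.
pose h i := p i * (x i - 1 - ln (x i)).
have h_ge0 i : 0 <= h i.
  by apply: mulr_ge0; [exact: ltW | have := ln_le_subr1 (x_gt0 i); lra].
have sum_h : \sum_i p i * ln (p i / q i) = \sum_i h i.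
  transitivity (\sum_i (h i + (p i - q i))).
    apply: eq_bigr => i _; rewrite /h /x -[p i / q i]invf_div lnV ?posrE ?divr_gt0 //.
    by field; rewrite gt_eqF.
  by rewrite big_split /= sumrB sum_pq subrr addr0.
rewrite sum_h; split; first exact: sumr_ge0.
move=> /(psumr_eq0P (fun i _ => h_ge0 i)) h0; apply/funext => i.
have /eqP := h0 i isT; rewrite /h mulf_eq0 gt_eqF //= subr_eq0 => /eqP.
by move/esym/(ln_eq_subr1 (x_gt0 i)) => /divr1_eq.
Qed.

End RealFacts.

Section MDP.
Variables (R : realType) (S A : finType).
Variables (P : A -> S -> S -> R) (r : S -> A -> R) (gamma tau alpha : R).
Local Notation K := (Kmat P gamma).
Local Notation E := (Efun P r gamma tau alpha).
Implicit Types (v : S -> R) (u : S -> A -> R).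

Definition Kflow u s' := \sum_s \sum_a K a s s' * u s a.

Definition qval v s a := r s a - \sum_s' K a s s' * v s'.

Definition policy u s a := u s a / utilde u s.

Definition policy_KL us u :=
  \sum_s \sum_a us s a * ln (policy us s a / policy u s a).

Lemma utilde_gt0 u s (a : A) : posu u -> 0 < utilde u s.
Proof.
move=> u_gt0; rewrite /utilde (bigD1 a) //= ltr_wpDr //.
by apply: sumr_ge0 => b _; exact: ltW.
Qed.

Lemma policy_KL_ge0_eq0 us u : posu us -> posu u ->
  0 <= policy_KL us u /\ (policy_KL us u = 0 -> policy u = policy us).
Proof.
move=> us_gt0 u_gt0.
pose q s a := utilde us s * policy u s a.
have q_gt0 s a : 0 < q s a.
  by rewrite mulr_gt0 ?divr_gt0 // (utilde_gt0 s a).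
have sum_q s : \sum_a us s a = \sum_a q s a.
  rewrite -mulr_sumr -mulr_suml; case: (pickP (fun _ : A => true)) => [a _|A0].
  - by rewrite divff ?mulr1 // gt_eqF // (utilde_gt0 s a).
  - by rewrite /utilde !big_pred0 ?mul0r.
have KL_s s : \sum_a us s a * ln (policy us s a / policy u s a) =
              \sum_a us s a * ln (us s a / q s a).
  apply: eq_bigr => a _; congr (_ * ln _); rewrite /q /policy.
  by field; rewrite !gt_eqF ?(utilde_gt0 s a) //.
have gibbs_s s := gibbs (us_gt0 s) (q_gt0 s) (sum_q s).
have KL_s_ge0 s : 0 <= \sum_a us s a * ln (policy us s a / policy u s a).
  by rewrite KL_s; case: (gibbs_s s).
split => [|KL0]; first by apply: sumr_ge0 => s _; exact: KL_s_ge0.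
apply/funext => s; apply/funext => a.
have KLs0 : \sum_a us s a * ln (us s a / q s a) = 0.
  by rewrite -KL_s; exact: (psumr_eq0P (fun s _ => KL_s_ge0 s) KL0).
have /(congr1 (fun f => f a)) := proj2 (gibbs_s s) KLs0.
rewrite /q /policy => ->.
by field; rewrite !gt_eqF // ?(utilde_gt0 s a).
Qed.

Lemma Kflow_adj v u :
  \sum_s' v s' * Kflow u s' = \sum_s \sum_a u s a * \sum_s' K a s s' * v s'.
Proof.
under eq_bigr => s' _ do rewrite /Kflow mulr_sumr.
rewrite exchange_big /=; apply: eq_bigr => s _.
under eq_bigr => s' _ do rewrite mulr_sumr.
rewrite exchange_big /=; apply: eq_bigr => a _.
by rewrite mulr_sumr; apply: eq_bigr => s' _; ring.
Qed.

Lemma KflowB u w s' :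
  Kflow (fun s a => u s a - w s a) s' = Kflow u s' - Kflow w s'.
Proof.
rewrite /Kflow -sumrB; apply: eq_bigr => s _.
by rewrite -sumrB; apply: eq_bigr => a _; rewrite mulrBr.
Qed.

Lemma pair_qval v u : \sum_s \sum_a u s a * qval v s a =
  \sum_s \sum_a u s a * r s a - \sum_s v s * Kflow u s.
Proof.
rewrite Kflow_adj -sumrB; apply: eq_bigr => s _.
by rewrite -sumrB; apply: eq_bigr => a _; rewrite mulrBr.
Qed.

Lemma EfunE v u : E v u =
  alpha / 2 * \sum_s v s ^+ 2 + \sum_s \sum_a u s a * r s a
  - \sum_s v s * Kflow u s - tau * \sum_s \sum_a u s a * ln (policy u s a).
Proof. by rewrite /Efun (pair_qval v u) addrA. Qed.

(* [E (., us)] is a quadratic in [v] with minimum at [Kflow us / alpha]. *)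
Lemma saddle_v_stationary vs us : 0 < alpha ->
  (forall v, E vs us <= E v us) -> forall s, alpha * vs s = Kflow us s.
Proof.
move=> alpha_gt0 vs_min.
pose w s := alpha^-1 * Kflow us s.
have Kflow_w s : Kflow us s = alpha * w s by rewrite /w mulrA divff ?mul1r ?gt_eqF.
have E_sq v : E v us - E w us = alpha / 2 * \sum_s (v s - w s) ^+ 2.
  have sum_Kflow x : \sum_s x s * Kflow us s = alpha * \sum_s x s * w s.
    by rewrite mulr_sumr; apply: eq_bigr => s _; rewrite Kflow_w mulrCA.
  have sum_ww : \sum_s w s * w s = \sum_s w s ^+ 2.
    by apply: eq_bigr => s _; rewrite expr2.
  by rewrite !EfunE !sum_Kflow sumr_sqrB sum_ww; field.
have : alpha / 2 * \sum_s (vs s - w s) ^+ 2 <= 0 by rewrite -E_sq subr_le0.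
rewrite pmulr_rle0 ?divr_gt0 // => /sumr_sqr_le0 vs_w s.
by rewrite Kflow_w -[vs s](subrK (w s)) vs_w add0r.
Qed.

Lemma Lyap_rate_identity vs us v u (dV : S -> R) (dU : S -> A -> R) :
  tau != 0 -> alpha != 0 -> posu us -> posu u ->
  (forall s', dV s' = - (v s' - alpha^-1 * Kflow u s')) ->
  (forall s a, dU s a = - (u s a * (ln (policy u s a) - tau^-1 * qval v s a))) ->
  alpha / 2 * \sum_s (2 * (v s - vs s) * dV s)
  + tau * \sum_s \sum_a (us s a * - (dU s a / u s a) + dU s a)
  = (E vs u - E vs us) + (E vs us - E v us)
    - alpha / 2 * \sum_s (v s - vs s) ^+ 2 - tau * policy_KL us u.
Proof.
move=> tau0 alpha0 us_gt0 u_gt0 dV_eq dU_eq.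
have rate_v : alpha / 2 * \sum_s (2 * (v s - vs s) * dV s) =
    \sum_s v s * Kflow u s - \sum_s vs s * Kflow u s
    - alpha * (\sum_s v s ^+ 2 - \sum_s v s * vs s).
  rewrite -!sumrB !mulr_sumr -sumrB; apply: eq_bigr => s _.
  by rewrite dV_eq; field.
have rate_u : tau * \sum_s \sum_a (us s a * - (dU s a / u s a) + dU s a) =
    tau * \sum_s \sum_a us s a * ln (policy u s a)
    - tau * \sum_s \sum_a u s a * ln (policy u s a)
    - \sum_s \sum_a us s a * qval v s a + \sum_s \sum_a u s a * qval v s a.
  rewrite !mulr_sumr -!sumrB -big_split /=; apply: eq_bigr => s _.
  rewrite !mulr_sumr -!sumrB -big_split /=; apply: eq_bigr => a _.
  by rewrite dU_eq; field; rewrite tau0 gt_eqF.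
have KL_split : policy_KL us u = \sum_s \sum_a us s a * ln (policy us s a)
                                 - \sum_s \sum_a us s a * ln (policy u s a).
  rewrite /policy_KL -sumrB; apply: eq_bigr => s _.
  rewrite -sumrB; apply: eq_bigr => a _.
  by rewrite ln_div ?mulrBr // posrE divr_gt0 // (utilde_gt0 s a).
rewrite rate_v rate_u KL_split !pair_qval !EfunE sumr_sqrB.
by field.
Qed.

Lemma Kflow_decomp x s' :
  Kflow x s' = utilde x s' - gamma * \sum_s \sum_a P a s s' * x s a.
Proof.
transitivity (\sum_s \sum_a (s == s')%:R * x s a
              - gamma * \sum_s \sum_a P a s s' * x s a).
  rewrite mulr_sumr -sumrB; apply: eq_bigr => s _.
  by rewrite mulr_sumr -sumrB; apply: eq_bigr => a _; rewrite /Kmat; ring.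
congr (_ - _); rewrite (bigD1 s') //= [X in _ + X]big1 ?addr0.
  by apply: eq_bigr => a _; rewrite eqxx mul1r.
by move=> s /negbTE ->; apply: big1 => a _; rewrite mul0r.
Qed.

Section Contraction.
Hypotheses (P_ge0 : forall a s s', 0 <= P a s s')
  (P_sum1 : forall a s, \sum_s' P a s s' = 1)
  (gamma_ge0 : 0 <= gamma) (gamma_lt1 : gamma < 1).

Lemma Kflow_scaled_eq0 (mu : S -> A -> R) (c : S -> R) :
  (forall s a, 0 <= mu s a) ->
  (forall s', Kflow (fun s a => c s * mu s a) s' = 0) ->
  forall s, c s * utilde mu s = 0.
Proof.
move=> mu_ge0 Kflow0.
pose w s := c s * utilde mu s.
have w_fix s' : w s' = gamma * \sum_s \sum_a P a s s' * (c s * mu s a).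
  by apply/eqP; rewrite -subr_eq0 /w /utilde mulr_sumr -Kflow_decomp Kflow0.
have norm_w s' :
    `|w s'| <= gamma * \sum_s \sum_a P a s s' * (`|c s| * mu s a).
  rewrite w_fix normrM ger0_norm // ler_wpM2l //.
  apply: (le_trans (ler_norm_sum _ _ _)); apply: ler_sum => s _.
  apply: (le_trans (ler_norm_sum _ _ _)); apply: ler_sum => a _.
  by rewrite !normrM (ger0_norm (P_ge0 a s s')) (ger0_norm (mu_ge0 s a)).
have sum_norm_w : \sum_s' `|w s'| <= gamma * \sum_s `|w s|.
  apply: (le_trans (ler_sum _ (fun s' _ => norm_w s'))).
  rewrite -mulr_sumr exchange_big /= (_ : \sum_s _ = \sum_s `|w s|) //.
  apply: eq_bigr => s _; rewrite exchange_big /= /w normrM.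
  rewrite (ger0_norm (sumr_ge0 _ (fun a _ => mu_ge0 s a))) /utilde mulr_sumr.
  by apply: eq_bigr => a _; rewrite -mulr_suml P_sum1 mul1r.
have sum_norm_w0 : \sum_s `|w s| = 0.
  apply/le_anti/andP; split; last by apply: sumr_ge0 => s _.
  have gap : 0 < 1 - gamma by rewrite subr_gt0.
  by rewrite -(pmulr_rle0 _ gap) mulrBl mul1r subr_le0.
move=> s; apply/normr0_eq0.
exact: (psumr_eq0P (fun s _ => normr_ge0 (w s)) sum_norm_w0).
Qed.

Lemma policy_Kflow_inj u us : posu u -> posu us ->
  policy u = policy us -> Kflow u = Kflow us -> u = us.
Proof.
move=> u_gt0 us_gt0 pol_eq Kflow_eq.
pose c s := utilde u s / utilde us s - 1.
have u_us s a : u s a - us s a = c s * us s a.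
  have := congr1 (fun f => f s a) pol_eq; rewrite /policy /c => pol_sa.
  have ut_neq0 : utilde u s != 0 by rewrite gt_eqF // (utilde_gt0 s a).
  by rewrite -[u s a](divfK ut_neq0) pol_sa; field; rewrite gt_eqF // (utilde_gt0 s a).
have Kflow0 s' : Kflow (fun s a => c s * us s a) s' = 0.
  have <- : (fun s a => u s a - us s a) = (fun s a => c s * us s a).
    by apply/funext => s; apply/funext => a; exact: u_us.
  by rewrite KflowB Kflow_eq subrr.
apply/funext => s; apply/funext => a; apply/eqP; rewrite -subr_eq0 u_us.
have /eqP := Kflow_scaled_eq0 (fun s a => ltW (us_gt0 s a)) Kflow0 s.
by rewrite mulf_eq0 (gt_eqF (utilde_gt0 s a us_gt0)) orbF => /eqP ->; rewrite mul0r.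
Qed.

End Contraction.

End MDP.

Section LyapDerivative.
Variables (R : realType) (S A : finType) (tau alpha : R).

Lemma derive1_Lyap vs us (V : R -> S -> R) (U : R -> S -> A -> R) t :
  posu us -> posu (U t) ->
  (forall s, derivable (fun x => V x s) t 1) ->
  (forall s a, derivable (fun x => U x s a) t 1) ->
  derive1 (fun x => Lyap tau alpha vs us (V x) (U x)) t =
  alpha / 2 * \sum_s (2 * (V t s - vs s) * derive1 (fun x => V x s) t)
  + tau * \sum_s \sum_a (us s a * - (derive1 (fun x => U x s a) t / U t s a)
                         + derive1 (fun x => U x s a) t).
Proof.
move=> us_gt0 Ut_gt0 dV dU.
have is_derive1 (f : R -> R) : derivable f t 1 -> is_derive t 1 f (derive1 f t).
  by move=> df; rewrite derive1E; exact: derivableP.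
rewrite derive1E; apply: derive_val.
apply: is_deriveD; apply: is_deriveZ; apply: is_derive_sumr => s.
  have := is_deriveX 2 (is_deriveB (is_derive1 _ (dV s)) (is_derive_cst (vs s) t 1)).
  by rewrite subr0 expr1.
apply: is_derive_sumr => a.
have dln := is_derive_ln_div (us_gt0 s a) (Ut_gt0 s a) (is_derive1 _ (dU s a)).
have := is_deriveB (is_deriveD (is_deriveZ (us s a) dln) (is_derive1 _ (dU s a)))
                   (is_derive_cst (us s a) t 1).
by rewrite subr0.
Qed.
End LyapDerivative.

Section Dynamics.
Variables (R : realType) (S A : finType).
Variables (P : A -> S -> S -> R) (r : S -> A -> R) (gamma tau alpha : R).
Hypotheses (tau_gt0 : 0 < tau) (alpha_gt0 : 0 < alpha).
Local Notation E := (Efun P r gamma tau alpha).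
Local Notation Lyap_along vs us V U := (fun x => Lyap tau alpha vs us (V x) (U x)).

Lemma derive1_Lyap_ngad vs us V U t : posu us ->
  ngad_at P r gamma tau alpha V U t ->
  derive1 (Lyap_along vs us V U) t =
  (E vs (U t) - E vs us) + (E vs us - E (V t) us)
  - alpha / 2 * \sum_s (V t s - vs s) ^+ 2 - tau * policy_KL us (U t).
Proof.
move=> us_gt0 [Ut_gt0 [dV [dU [dV_eq dU_eq]]]].
rewrite derive1_Lyap //; apply: Lyap_rate_identity; rewrite ?gt_eqF //.
Qed.

Lemma derive1_Lyap_le0_eq0 vs us V U t :
  is_saddle P r gamma tau alpha vs us -> ngad_at P r gamma tau alpha V U t ->
  derive1 (Lyap_along vs us V U) t <= 0 /\
  (derive1 (Lyap_along vs us V U) t = 0 -> V t = vs /\ policy (U t) = policy us).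
Proof.
move=> [us_gt0 [u_max v_min]] ngad.
have [KL_ge0 KL_eq0] := policy_KL_ge0_eq0 us_gt0 (proj1 ngad).
rewrite derive1_Lyap_ngad //.
have u_term : E vs (U t) - E vs us <= 0 by rewrite subr_le0; exact/u_max/(proj1 ngad).
have v_term : E vs us - E (V t) us <= 0 by rewrite subr_le0.
have sq_ge0 : 0 <= \sum_s (V t s - vs s) ^+ 2 by apply: sumr_ge0 => s _; exact: sqr_ge0.
have a2_gt0 : 0 < alpha / 2 by rewrite divr_gt0.
have sq_term := mulr_ge0 (ltW a2_gt0) sq_ge0.
have KL_term := mulr_ge0 (ltW tau_gt0) KL_ge0.
split; first lra.
move=> rate0; split.
- apply/funext => s; apply/eqP; rewrite -subr_eq0; apply/eqP; move: s.
  apply: sumr_sqr_le0; rewrite -(pmulr_rle0 _ a2_gt0); lra.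
- apply: KL_eq0; have /eqP : tau * policy_KL us (U t) = 0 by lra.
  by rewrite mulf_eq0 gt_eqF //= => /eqP.
Qed.

End Dynamics.

Unset Implicit Arguments.

Theorem lemma2p3 (R : realType) (S A : finType)
  (P : A -> S -> S -> R) (r : S -> A -> R) (gamma tau alpha : R)
  (vs : S -> R) (us : S -> A -> R) :
  (forall a s s', 0 <= P a s s') ->
  (forall a s, \sum_(s' : S) P a s s' = 1) ->
  (forall s a, 0 <= r s a) ->
  0 < gamma -> gamma < 1 -> 0 < tau -> 0 < alpha ->
  is_saddle P r gamma tau alpha vs us ->
  (* dL/dt <= 0 along trajectories *)
  (forall (V : R -> S -> R) (U : R -> S -> A -> R) (t : R),
     ngad_at P r gamma tau alpha V U t ->
     derive1 (fun x => Lyap tau alpha vs us (V x) (U x)) t <= 0) /\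
  (* the only trajectory with dL/dt = 0 is the constant (vs, us) *)
  (forall (V : R -> S -> R) (U : R -> S -> A -> R) (a b : R),
     a < b ->
     (forall t, t \in `]a, b[ -> ngad_at P r gamma tau alpha V U t) ->
     (forall t, t \in `]a, b[ ->
        derive1 (fun x => Lyap tau alpha vs us (V x) (U x)) t = 0) ->
     forall t, t \in `]a, b[ -> V t = vs /\ U t = us).
Proof.
move=> P_ge0 P_sum1 _ gamma_gt0 gamma_lt1 tau_gt0 alpha_gt0 saddle.
have rate V U t := derive1_Lyap_le0_eq0 tau_gt0 alpha_gt0 (V := V) (U := U) (t := t) saddle.
split=> [V U t /rate[] // | V U a b _ ngad rate0].
have V_pol t : t \in `]a, b[ -> V t = vs /\ policy (U t) = policy us.
  by move=> t_ab; apply: (proj2 (rate _ _ _ (ngad t t_ab))); exact: rate0.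
move=> t t_ab; have [Vt_vs pol_eq] := V_pol t t_ab; split => //.
have [us_gt0 [_ v_min]] := saddle.
have [Ut_gt0 [_ [_ [dV_eq _]]]] := ngad t t_ab.
apply: (policy_Kflow_inj P_ge0 P_sum1 (ltW gamma_gt0) gamma_lt1) => //.
apply/funext => s'.
have dV0 : derive1 (fun x => V x s') t = 0.
  rewrite derive1E (near_eq_derive _ (g := fun=> vs s')) ?derive_cst //.
  by apply: filterS (near_in_itvoo t_ab) => x /V_pol[-> _].
rewrite -(saddle_v_stationary alpha_gt0 v_min s').
have := dV_eq s'; rewrite dV0 Vt_vs => /eqP; rewrite eq_sym oppr_eq0 subr_eq0 => /eqP ->.
by rewrite mulrA divff ?mul1r // gt_eqF.
Qed.
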